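(* Let $K$ be a real closed field, $C$ a multiplicative cut in $K$, and let $L$ be the real closure of the ordered field $K(x)$, where $x$ realizes the cut $C$. Then for any $y\in L$ realizing the same cut $C$ of $K$, we have $x^{1/n}<y<x^n$ for some positive integer $n$.
   Context: A cut of a real closed field $K$ is a pair $C=(C^-,C^+)$ with $K=C^-\cup C^+$ disjoint and $C^-<C^+$. $K_+=\{c\in K:c>0\}$. The cut $C$ is multiplicative if $C^-\cap K_+$ is closed under multiplication and contains $2$. If $K\subseteq L$ are ordered fields, an element $a\in L$ realizes the cut $C$ of $K$ if $C^-=\{c\in K:c<a\}$ and $C^+=\{c\in K:c>a\}$. $K(x)$ denotes the ordered field generated by $K$ and an element $x$ realizing $C$. *)

From HB Require Import structures.
From mathcomp Require Import all_boot all_order all_algebra.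
Set Implicit Arguments. Unset Strict Implicit. Unset Printing Implicit Defensive.
Import Order.TTheory GRing.Theory Num.Theory.
Local Open Scope ring_scope.

(* A cut C = (C^-, C^+) of K is represented by its lower part Cm : pred K;
   C^+ is the complement of Cm.  The condition C^- < C^+ says every element
   of Cm is below every element outside Cm. *)
Definition is_cut (K : rcfType) (Cm : pred K) : Prop :=
  forall a b : K, a \in Cm -> b \notin Cm -> a < b.

Definition multiplicative_cut (K : rcfType) (Cm : pred K) : Prop :=
  is_cut Cm /\ (2%:R \in Cm) /\
  (forall a b : K, 0 < a -> 0 < b -> a \in Cm -> b \in Cm -> a * b \in Cm).

Definition realizes (K L : rcfType) (f : {rmorphism K -> L}) (Cm : pred K) (a : L)
  : Prop :=
  forall c : K, (c \in Cm <-> f c < a) /\ (c \notin Cm <-> a < f c).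

Definition in_Kx (K L : rcfType) (f : {rmorphism K -> L}) (x z : L) : Prop :=
  exists p q : {poly K},
    (map_poly f q).[x] != 0 /\ z = (map_poly f p).[x] / (map_poly f q).[x].

Definition is_real_closure_of_Kx (K L : rcfType) (f : {rmorphism K -> L}) (x : L)
  : Prop :=
  {mono f : a b / a <= b} /\
  forall z : L, exists p : {poly L},
    [/\ p != 0, root p z & forall i : nat, in_Kx f x p`_i].

(* x^{1/n} < y, with x^{1/n} the positive n-th root of x. *)
Definition root_lt (L : rcfType) (n : nat) (x y : L) : Prop :=
  exists r : L, [/\ 0 < r, r ^+ n = x & r < y].

From HB Require Import structures.
From mathcomp Require Import all_boot all_order all_algebra.
From mathcomp Require Import lra zify.
From Stdlib Require Import Classical.
Set Implicit Arguments. Unset Strict Implicit. Unset Printing Implicit Defensive.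
Import Order.TTheory GRing.Theory Num.Theory.
Local Open Scope ring_scope.

(* Suppose y exceeded every power of x.  Then for nonzero a, a' in K any two
   distinct terms |a| x^p y^q and |a'| x^p' y^q' differ by more than every
   natural factor: if b = |a|/|a'| or 1/b lies above the cut, it exceeds every
   power of y; otherwise both lie below it, so by multiplicativity x exceeds
   n b and n / b for every n, and the lexicographic order on (q, p) decides.
   A sum of such terms is dominated by its largest one and cannot vanish,
   contradicting the algebraicity of y over K(x).  Symmetrically x does not
   exceed every power of y, so x and y bound each other by powers. *)

Lemma rcf_nth_root (R : rcfType) (n : nat) (c : R) :
  (0 < n)%N -> 0 < c -> exists2 r : R, 0 < r & r ^+ n = c.
Proof.
move=> n_gt0 c_gt0.
have c1_le : 1 + c <= (1 + c) ^+ n by apply: ler_eXnr => //; lra.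
have [||r /andP[r_ge0 _]] := @poly_ivt R ('X^n - c%:P) 0 (1 + c).
- lra.
- by rewrite !hornerE expr0n (gtn_eqF n_gt0) sub0r oppr_le0 subr_ge0; lra.
- rewrite /root !hornerE subr_eq0 => /eqP rc; exists r => //.
  rewrite lt_def r_ge0 andbT; apply: contraTneq c_gt0 => r0.
  by rewrite -rc r0 expr0n (gtn_eqF n_gt0) ltxx.
Qed.

Definition dominates (R : numDomainType) (a b : R) := forall N : nat, N%:R * b < a.

Lemma dominatesMl (R : numDomainType) (s a b : R) :
  0 < s -> dominates a b -> dominates (s * a) (s * b).
Proof. by move=> s_gt0 ab N; rewrite mulrCA ltr_pM2l. Qed.

Lemma dominated_sum_neq0 (R : realFieldType) (I : finType) (t : I -> R) :
  (forall k l, k != l -> t k != 0 -> t l != 0 ->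
     dominates `|t k| `|t l| \/ dominates `|t l| `|t k|) ->
  (exists k, t k != 0) -> \sum_k t k != 0.
Proof.
move=> comparable [k0 tk0].
have [km _ km_max] := @arg_maxP _ _ _ k0 predT (fun k => `|t k|) isT.
set M := `|t km| in km_max *.
have M_gt0 : 0 < M by apply: lt_le_trans (km_max k0 isT); rewrite normr_gt0.
have others_small k : k != km -> #|I|%:R * `|t k| <= M.
  move=> k_km; have [->|tk] := eqVneq (t k) 0; first by rewrite normr0 mulr0 ltW.
  have tkm : t km != 0 by rewrite -normr_eq0 gt_eqF.
  case: (comparable _ _ k_km tk tkm) => [/(_ 1%N)|/(_ #|I|)/ltW //].
  by rewrite mul1r => /lt_le_trans/(_ (km_max k isT)); rewrite ltxx.
apply/eqP; rewrite (bigD1 km) //= => /eqP; rewrite addr_eq0 => /eqP tkm.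
have M_le : M <= \sum_(k | k != km) `|t k| by rewrite /M tkm normrN ler_norm_sum.
have : #|I|%:R * M <= M *+ #|I|.-1.
  rewrite -(cardC1 km) -[M *+ _]sumr_const.
  apply: le_trans (ler_wpM2l (ler0n _ _) M_le) _.
  by rewrite mulr_sumr; apply: ler_sum => k; apply: others_small.
have I_gt0 : (0 < #|I|)%N by apply/card_gt0P; exists k0.
by rewrite mulr_natl leNgt ltr_pMn2l // ltn_predL I_gt0.
Qed.

Section InfiniteMonomials.

Variables (R : realFieldType) (u v : R).
Hypothesis u_gt_nat : forall N : nat, N%:R < u.
Hypothesis expr_lt_v : forall k : nat, u ^+ k < v.

Let u_gt1 : 1 < u. Proof. exact: u_gt_nat 1%N. Qed.
Let u_lt_v : u < v. Proof. by rewrite -[u]expr1. Qed.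
Let v_gt1 : 1 < v. Proof. exact: lt_trans u_gt1 u_lt_v. Qed.
Let u_gt0 : 0 < u. Proof. exact: lt_trans ltr01 u_gt1. Qed.
Let v_gt0 : 0 < v. Proof. exact: lt_trans ltr01 v_gt1. Qed.

Lemma dominates_monomial_by_large (beta : R) (p q p' q' : nat) :
  (forall k : nat, v ^+ k < beta) ->
  dominates (beta * (u ^+ p * v ^+ q)) (u ^+ p' * v ^+ q').
Proof.
move=> v_lt_beta N.
have m_ge1 : 1 <= u ^+ p * v ^+ q by rewrite mulr_ege1 // exprn_ege1 // ltW.
have m'_le : u ^+ p' * v ^+ q' <= v ^+ (p' + q').
  by rewrite exprD ler_wpM2r ?exprn_ge0 ?lerXn2r ?nnegrE ?ltW.
have N_lt_v : N%:R < v := lt_trans (u_gt_nat N) u_lt_v.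
have beta_gt0 : 0 < beta by apply: lt_trans (v_lt_beta 0%N); rewrite expr0.
apply: (le_lt_trans (ler_wpM2l (ler0n _ _) m'_le)).
apply: (lt_le_trans _ (ler_peMr (ltW beta_gt0) m_ge1)).
apply: le_lt_trans (v_lt_beta (p' + q').+1); rewrite exprS.
by rewrite ler_wpM2r ?exprn_ge0 // ltW.
Qed.

Lemma dominates_monomial_by_u (beta : R) (p p' q : nat) :
  (forall N : nat, N%:R < beta * u) -> (p' < p)%N ->
  dominates (beta * (u ^+ p * v ^+ q)) (u ^+ p' * v ^+ q).
Proof.
move=> beta_u_gt lt_p N.
have beta_gt0 : 0 < beta.
  by rewrite -(pmulr_lgt0 _ u_gt0); apply: le_lt_trans (beta_u_gt 0%N).
have up_gt0 : 0 < u ^+ p' * v ^+ q by rewrite mulr_gt0 ?exprn_gt0.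
apply: (lt_le_trans (_ : _ < (beta * u) * (u ^+ p' * v ^+ q))); first by rewrite ltr_pM2r.
rewrite -mulrA ler_wpM2l ?(ltW beta_gt0) // mulrA -exprS.
by rewrite ler_wpM2r ?exprn_ge0 ?(ltW v_gt0) // ler_weXn2l // ltW.
Qed.

Lemma dominates_monomial_by_v (beta : R) (p q p' q' : nat) :
  1 < beta * u -> (q' < q)%N ->
  dominates (beta * (u ^+ p * v ^+ q)) (u ^+ p' * v ^+ q').
Proof.
move=> beta_u_gt1 lt_q N.
have beta_gt0 : 0 < beta by rewrite -(pmulr_lgt0 _ u_gt0); apply: lt_trans beta_u_gt1.
have N_up_lt : N%:R * u ^+ p' < beta * v.
  apply: (lt_trans (_ : _ < u ^+ p'.+1)).
    by rewrite exprSr mulrC ltr_pM2l ?exprn_gt0.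
  apply: (lt_trans (_ : _ < beta * u ^+ p'.+2)).
    by rewrite [in X in _ < X]exprS mulrA -[X in X < _]mul1r ltr_pM2r ?exprn_gt0.
  by rewrite ltr_pM2l.
rewrite [N%:R * _]mulrA; apply: (lt_le_trans (_ : _ < beta * v * v ^+ q')).
  by rewrite ltr_pM2r ?exprn_gt0.
rewrite -mulrA -exprS ler_wpM2l ?(ltW beta_gt0) //.
apply: le_trans (_ : v ^+ q <= _); first by rewrite ler_weXn2l // ltW.
by rewrite ler_peMl ?exprn_ge0 ?(ltW v_gt0) // exprn_ege1 // ltW.
Qed.

Lemma dominates_monomial_lex (beta : R) (p q p' q' : nat) :
  (forall N : nat, N%:R < beta * u) -> (q' < q)%N || (q == q') && (p' < p)%N ->
  dominates (beta * (u ^+ p * v ^+ q)) (u ^+ p' * v ^+ q').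
Proof.
move=> beta_u_gt /orP[lt_q | /andP[/eqP <- lt_p]].
  exact: dominates_monomial_by_v (beta_u_gt 1%N) lt_q.
exact: dominates_monomial_by_u.
Qed.

End InfiniteMonomials.

Section MultiplicativeCut.

Variables (K : rcfType) (Cm : pred K).
Hypothesis Cm_mult : multiplicative_cut Cm.

Let Cm_cut : is_cut Cm. Proof. by case: Cm_mult. Qed.
Let Cm2 : 2%:R \in Cm. Proof. by case: Cm_mult => _ []. Qed.
Let CmM a b : 0 < a -> 0 < b -> a \in Cm -> b \in Cm -> a * b \in Cm.
Proof. by case: Cm_mult => _ [_]; apply. Qed.

Lemma cut_le_closed (a b : K) : a <= b -> b \in Cm -> a \in Cm.
Proof.
move=> le_ab Cb; apply/negPn/negP => /(Cm_cut Cb).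
by rewrite ltNge le_ab.
Qed.

Lemma mult_cut1 : 1 \in Cm.
Proof. by apply: cut_le_closed Cm2; rewrite ler1n. Qed.

Lemma mult_cutX (c : K) (n : nat) : 0 < c -> c \in Cm -> c ^+ n \in Cm.
Proof.
move=> c_gt0 Cc; elim: n => [|n IHn]; first by rewrite expr0 mult_cut1.
by rewrite exprS CmM // exprn_gt0.
Qed.

Lemma mult_cut_natmul (c : K) (N : nat) : 0 < c -> c \in Cm -> N%:R * c \in Cm.
Proof.
move=> c_gt0 Cc; case: N => [|N].
  by rewrite mul0r (cut_le_closed ler01 mult_cut1).
apply: CmM => //; apply: cut_le_closed (mult_cutX N.+1 _ Cm2) => //.
by rewrite -natrX ler_nat ltnW // ltn_expl.
Qed.

Variables (L : rcfType) (f : {rmorphism K -> L}).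
Hypothesis f_mono : {mono f : a b / a <= b}.

Let f_mono_lt : {mono f : a b / a < b}. Proof. exact: leW_mono. Qed.

Lemma mono_rmorph_norm (a : K) : f `|a| = `|f a|.
Proof.
have [a_ge0|a_lt0] := leP 0 a.
  by rewrite !ger0_norm // -(rmorph0 f) f_mono.
by rewrite !ltr0_norm ?rmorphN // -(rmorph0 f) f_mono_lt.
Qed.

Lemma mono_rmorph_norm_ratio (a a' : K) :
  a' != 0 -> `|f a| = `|f a'| * f (`|a| / `|a'|).
Proof.
move=> a'0; rewrite fmorph_div !mono_rmorph_norm mulrC divfK //.
by rewrite normr_eq0 fmorph_eq0.
Qed.

Section Realization.

Variable u : L.
Hypothesis u_realizes : realizes f Cm u.

Lemma realizes_gt_natmul (c : K) (N : nat) :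
  0 < c -> c \in Cm -> N%:R * f c < u.
Proof.
move=> c_gt0 Cc; rewrite -(rmorph_nat f) -rmorphM.
by apply/(u_realizes _).1; apply: mult_cut_natmul.
Qed.

Lemma realizes_gt_nat (N : nat) : N%:R < u.
Proof. by have := @realizes_gt_natmul 1 N ltr01 mult_cut1; rewrite rmorph1 mulr1. Qed.

Lemma realizes_absorbs (c : K) :
  0 < c -> c^-1 \in Cm -> forall N : nat, N%:R < f c * u.
Proof.
move=> c_gt0 CcV N; have fc_gt0 : 0 < f c by rewrite -(rmorph0 f) f_mono_lt.
have cV_gt0 : 0 < c^-1 by rewrite invr_gt0.
have := realizes_gt_natmul N cV_gt0 CcV.
by rewrite fmorphV ltr_pdivrMr // mulrC.
Qed.

Lemma realizes_lt_expr (c : K) :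
  0 < c -> c \notin Cm -> forall k : nat, u ^+ k < f c.
Proof.
move=> c_gt0 Cc [|k].
  by rewrite expr0 -(rmorph1 f) f_mono_lt (Cm_cut mult_cut1).
have [r r_gt0 rk] := rcf_nth_root (n := k.+1) isT c_gt0.
have Cr : r \notin Cm by apply: contra Cc => Cr; rewrite -rk mult_cutX.
rewrite -rk rmorphXn ltrXn2r //; last exact/(u_realizes r).2.
exact: ltW (le_lt_trans (ler0n _ 0) (realizes_gt_nat 0)).
Qed.

End Realization.

Lemma realizes_terms_dominate (u v : L) (a a' : K) (p q p' q' : nat) :
  realizes f Cm u -> realizes f Cm v -> (forall k : nat, u ^+ k < v) ->
  a != 0 -> a' != 0 -> (p != p') || (q != q') ->
  let t := `|f a| * (u ^+ p * v ^+ q) in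
  let t' := `|f a'| * (u ^+ p' * v ^+ q') in
  dominates t t' \/ dominates t' t.
Proof.
move=> hu hv uv a0 a'0 pq_neq t t'.
have u_gt_nat := realizes_gt_nat hu.
set b := `|a| / `|a'|.
have b_gt0 : 0 < b by rewrite divr_gt0 ?normr_gt0.
have bV : b^-1 = `|a'| / `|a| by rewrite invf_div.
have fa_gt0 : 0 < `|f a| by rewrite normr_gt0 fmorph_eq0.
have fa'_gt0 : 0 < `|f a'| by rewrite normr_gt0 fmorph_eq0.
have Et : t = `|f a'| * (f b * (u ^+ p * v ^+ q)).
  by rewrite /t /b (mono_rmorph_norm_ratio a a'0) -mulrA.
have Et' : t' = `|f a| * (f b^-1 * (u ^+ p' * v ^+ q')).
  by rewrite /t' bV (mono_rmorph_norm_ratio a' a0) -mulrA.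
have [Cb|nCb] := boolP (b \in Cm); last first.
  by left; rewrite Et; apply/dominatesMl/dominates_monomial_by_large/realizes_lt_expr.
have [CbV|nCbV] := boolP (b^-1 \in Cm); last first.
  right; rewrite Et'; apply/dominatesMl/dominates_monomial_by_large/realizes_lt_expr => //.
  by rewrite invr_gt0.
have [lex|nlex] := boolP ((q' < q)%N || (q == q') && (p' < p)%N).
  left; rewrite Et; apply/dominatesMl/dominates_monomial_lex => //.
  exact: realizes_absorbs.
right; rewrite Et'; apply/dominatesMl/dominates_monomial_lex => //.
  by apply: realizes_absorbs; rewrite ?invr_gt0 ?invrK.
by move: nlex pq_neq; rewrite negb_or negb_and -!leqNgt; lia.
Qed.

Lemma realizes_monomials_free (u v : L) (n m : nat) (c : 'I_n -> 'I_m -> K) :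
  realizes f Cm u -> realizes f Cm v -> (forall k : nat, u ^+ k < v) ->
  \sum_(i < n) \sum_(j < m) f (c i j) * (u ^+ i * v ^+ j) = 0 ->
  forall i j, c i j = 0.
Proof.
move=> hu hv uv; rewrite pair_big /= => sum0 i j; apply/eqP; apply: contraT => cij.
have u_gt0 : 0 < u := le_lt_trans (ler0n _ 0) (realizes_gt_nat hu 0).
have v_gt0 : 0 < v := le_lt_trans (ler0n _ 0) (realizes_gt_nat hv 0).
pose t (k : 'I_n * 'I_m) := f (c k.1 k.2) * (u ^+ k.1 * v ^+ k.2).
have m_gt0 (k : 'I_n * 'I_m) : 0 < u ^+ k.1 * v ^+ k.2 by rewrite mulr_gt0 ?exprn_gt0.
have t_neq0 k : (t k != 0) = (c k.1 k.2 != 0).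
  by rewrite mulf_eq0 fmorph_eq0 (gt_eqF (m_gt0 k)) orbF.
have t_norm k : `|t k| = `|f (c k.1 k.2)| * (u ^+ k.1 * v ^+ k.2).
  by rewrite normrM [`|_ * _|]gtr0_norm.
suff : \sum_k t k != 0 by rewrite sum0 eqxx.
apply: dominated_sum_neq0; last first.
  by exists (i, j); rewrite t_neq0.
move=> [k1 k2] [l1 l2] kl; rewrite !t_neq0 !t_norm /= => ck cl.
apply: realizes_terms_dominate => //.
by move: kl; rewrite xpair_eqE negb_and.
Qed.

End MultiplicativeCut.

Section AlgebraicRelation.

Variables (K L : rcfType) (f : {rmorphism K -> L}) (x : L).

Lemma in_Kx_common_denominator (n : nat) (z : 'I_n -> L) :
  (forall i, in_Kx f x (z i)) ->
  exists (d : {poly K}) (P : 'I_n -> {poly K}),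
    (map_poly f d).[x] != 0 /\
    forall i, z i * (map_poly f d).[x] = (map_poly f (P i)).[x].
Proof.
pose ev (r : {poly K}) := (map_poly f r).[x].
move=> z_in; have /fin_all_exists[pq pq_spec] :
    forall i, exists pq : {poly K} * {poly K}, ev pq.2 != 0 /\ z i = ev pq.1 / ev pq.2.
  by move=> i; have [p [q pq]] := z_in i; exists (p, q).
have ev_prod (P : pred 'I_n) (F : 'I_n -> {poly K}) :
    ev (\prod_(i | P i) F i) = \prod_(i | P i) ev (F i).
  by rewrite /ev rmorph_prod horner_prod.
exists (\prod_i (pq i).2), (fun i => (pq i).1 * \prod_(j | j != i) (pq j).2); split.
  by rewrite -/(ev _) ev_prod; apply/prodf_neq0 => i _; case: (pq_spec i).
move=> i; have [qi_neq0 zi] := pq_spec i.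
change (z i * ev (\prod_j (pq j).2) = ev ((pq i).1 * \prod_(j | j != i) (pq j).2)).
by rewrite /ev rmorphM hornerM -!/(ev _) !ev_prod (bigD1 i) //= zi mulrA divfK.
Qed.

Lemma algebraic_relation (y : L) :
  (exists p : {poly L}, [/\ p != 0, root p y & forall i : nat, in_Kx f x p`_i]) ->
  exists n m (c : 'I_n -> 'I_m -> K), (exists i j, c i j != 0) /\
    \sum_(i < n) \sum_(j < m) f (c i j) * (x ^+ j * y ^+ i) = 0.
Proof.
move=> [p [p_neq0 /eqP py0 p_in]].
have [d [P [d_neq0 dP]]] :=
  @in_Kx_common_denominator (size p) (fun i => p`_i) (fun i => p_in i).
pose m := \max_i size (P i).
have size_P i : (size (P i) <= m)%N by apply: (leq_bigmax (F := fun i => size (P i))).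
exists (size p), m, (fun i j => (P i)`_j); split.
  have [i0 pi0] : exists i0 : 'I_(size p), p`_i0 != 0.
    have i0_lt : ((size p).-1 < size p)%N by rewrite prednK // lt0n size_poly_eq0.
    by exists (Ordinal i0_lt); rewrite -lead_coefE lead_coef_eq0.
  have P_neq0 : P i0 != 0.
    by apply: contra_neq (mulf_neq0 pi0 d_neq0) => P0; rewrite dP P0 rmorph0 horner0.
  have j0_lt : ((size (P i0)).-1 < m)%N by rewrite prednK ?lt0n ?size_poly_eq0.
  by exists i0, (Ordinal j0_lt); rewrite /= -lead_coefE lead_coef_eq0.
have row i :
    \sum_(j < m) f (P i)`_j * (x ^+ j * y ^+ i) = p`_i * (map_poly f d).[x] * y ^+ i.
  rewrite dP (@horner_coef_wide _ m) ?size_map_poly // mulr_suml.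
  by apply: eq_bigr => j _; rewrite coef_map mulrA.
rewrite (eq_bigr _ (fun i _ => row i)).
rewrite (eq_bigr (fun i : 'I_(size p) => (map_poly f d).[x] * (p`_i * y ^+ i))).
  by rewrite -mulr_sumr -horner_coef py0 mulr0.
by move=> i _; rewrite mulrAC mulrC.
Qed.

End AlgebraicRelation.

Lemma exists_expr_gt (R : realDomainType) (x y : R) :
  1 < x -> ~ (forall k : nat, x ^+ k < y) -> exists n : nat, y < x ^+ n.
Proof.
move=> x_gt1 /not_all_ex_not[k /negP]; rewrite -leNgt => y_le.
by exists k.+1; apply: le_lt_trans y_le _; rewrite ltr_eXn2l.
Qed.

Lemma root_lt_of_lt_expr (R : rcfType) (n : nat) (x y : R) :
  (0 < n)%N -> 0 < x -> 0 <= y -> x < y ^+ n -> root_lt n x y.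
Proof.
move=> n_gt0 x_gt0 y_ge0 x_lt; have [r r_gt0 rn] := rcf_nth_root n_gt0 x_gt0.
exists r; split => //; rewrite ltNge; apply: contraTN x_lt => y_le_r.
by rewrite -leNgt -rn lerXn2r // nnegrE ltW.
Qed.

Theorem lemma2p9 (K L : rcfType) (f : {rmorphism K -> L}) (Cm : pred K) (x : L) :
  multiplicative_cut Cm ->
  realizes f Cm x ->
  is_real_closure_of_Kx f x ->
  forall y : L, realizes f Cm y ->
  exists n : nat, (0 < n)%N /\ root_lt n x y /\ y < x ^+ n.
Proof.
move=> hm hx [f_mono y_alg] y hy.
have [n [m [c [[i0 [j0 c0]] rel]]]] := algebraic_relation (y_alg y).
have x_gt1 : 1 < x := realizes_gt_nat hm hx 1.
have y_gt1 : 1 < y := realizes_gt_nat hm hy 1.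
have [n1 y_lt] : exists n1, y < x ^+ n1.
  apply: exists_expr_gt x_gt1 _ => xy; move/eqP: c0; apply.
  apply: (realizes_monomials_free hm f_mono hx hy xy (c := fun j i => c i j)).
  by rewrite exchange_big.
have [n2 x_lt] : exists n2, x < y ^+ n2.
  apply: exists_expr_gt y_gt1 _ => yx; move/eqP: c0; apply.
  apply: (realizes_monomials_free hm f_mono hy hx yx); rewrite -[RHS]rel.
  by apply: eq_bigr => i _; apply: eq_bigr => j _; rewrite [y ^+ _ * _]mulrC.
exists (maxn n1 n2).+1; split => //; split.
  apply: root_lt_of_lt_expr; [by []|lra|lra|].
  by apply: lt_le_trans x_lt _; rewrite ler_eXn2l //; lia.
by apply: lt_le_trans y_lt _; rewrite ler_eXn2l //; lia.
Qed.
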